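(* Let $G=(\mathcal{V},\mathcal{D})$ be an undirected graph with $\mathcal{V}=\{1,\dots,n\}$, and let $M_G$ be the latent conditional model associated with $G$ as described in the context, with $\alpha=\sum_{v\in\mathcal{V}}2^{\deg(v)}$. If $G$ has a clique of size $c$, then there is a labeling $\mathbf{y}\in\{E,N\}^n$ with $P(\mathbf{y})\geq c/\alpha$.
   Context: The model $M_G$: sequence length $m=n=|\mathcal{V}|$; label set $\mathcal{Y}=\{E,N\}$; latent variables $\mathcal{H}(E)=\{E^1,\dots,E^n\}$, $\mathcal{H}(N)=\{N^1,\dots,N^n\}$, $\mathcal{H}=\mathcal{H}(E)\cup\mathcal{H}(N)$. For each $i\in\mathcal{V}$ the layer $L_i$ is the set of latent-labelings $\mathbf{h}=(h_1,\dots,h_n)$ such that $h_k\in\{E^i,N^i\}$ for all $k$, $h_i=E^i$, and for $k\neq i$, $h_k=E^i$ is allowed only if $\{k,i\}\in\mathcal{D}$ (if $\{k,i\}\in\mathcal{D}$ both $E^i$ and $N^i$ are allowed at position $k$; otherwise only $N^i$). A latent-labeling is valid if it lies in some layer $L_i$; there are exactly $\alpha=\sum_{v\in\mathcal{V}}2^{\deg(v)}$ valid latent-labelings. The node and edge scores of $M_G$ are chosen so that $P(\mathbf{h})=1/\alpha$ for every valid latent-labeling and $P(\mathbf{h})=0$ otherwise. The probability of a labeling $\mathbf{y}\in\{E,N\}^n$ is $P(\mathbf{y})=\sum_{\mathbf{h}:\,h_j\in\mathcal{H}(y_j)\ \forall j}P(\mathbf{h})$. Here $\deg(v)$ is the degree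 of $v$ in $G$. *)

From mathcomp Require Import all_boot all_order all_algebra.
Set Implicit Arguments. Unset Strict Implicit. Unset Printing Implicit Defensive.
Import Order.TTheory GRing.Theory Num.Theory.
Local Open Scope ring_scope.

(* Graph G = (V, D) with V = 'I_n (vertices 1..n shifted to 0..n-1);
   D given by a boolean relation [adj] (assumed symmetric, irreflexive). *)

(* Labels: true = E, false = N. *)
Definition label := bool.

(* Latent variable E^i is (true, i), N^i is (false, i). *)
Definition latent n := (bool * 'I_n)%type.

Definition latent_labeling n := {ffun 'I_n -> latent n}.

Definition deg n (adj : rel 'I_n) (v : 'I_n) : nat := #|[set u | adj v u]|.

Definition alpha n (adj : rel 'I_n) : nat := (\sum_(v : 'I_n) 2 ^ deg adj v)%N.

Definition in_layer n (adj : rel 'I_n) (i : 'I_n) (h : latent_labeling n) : bool :=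
  [forall k : 'I_n, ((h k).2 == i)
     && ((h k).1 ==> ((k == i) || adj k i))]
  && ((h i).1 == true).

Definition valid n (adj : rel 'I_n) (h : latent_labeling n) : bool :=
  [exists i : 'I_n, in_layer adj i h].

Definition Ph (R : realFieldType) n (adj : rel 'I_n) (h : latent_labeling n) : R :=
  if valid adj h then ((alpha adj)%:R)^-1 else 0.

Definition compatible n (y : {ffun 'I_n -> label}) (h : latent_labeling n) : bool :=
  [forall j : 'I_n, (h j).1 == y j].

Definition Py (R : realFieldType) n (adj : rel 'I_n) (y : {ffun 'I_n -> label}) : R :=
  \sum_(h : latent_labeling n | compatible y h) Ph R adj h.

Definition is_clique n (adj : rel 'I_n) (C : {set 'I_n}) : Prop :=
  forall u v, u \in C -> v \in C -> u != v -> adj u v.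

From mathcomp Require Import all_boot all_order all_algebra.
Import Order.TTheory GRing.Theory Num.Theory.
Set Implicit Arguments. Unset Strict Implicit. Unset Printing Implicit Defensive.
Local Open Scope ring_scope.

(* Label the clique C by E and everything else by N.  For each i in C, the
   latent labeling that puts E^i on C and N^i elsewhere lies in layer L_i
   (C is a clique through i) and is compatible with that labeling.  These c
   latent labelings are distinct, each has probability 1/alpha, and all the
   other terms of P(y) are nonnegative. *)

Lemma Ph_ge0 (R : realFieldType) n (adj : rel 'I_n) (h : latent_labeling n) :
  0 <= Ph R adj h.
Proof. by rewrite /Ph; case: ifP => // _; rewrite invr_ge0 ler0n. Qed.

Lemma Py_ge_sum (R : realFieldType) n (adj : rel 'I_n)
    (y : {ffun 'I_n -> label}) (S : {set latent_labeling n}) :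
  {in S, forall h, compatible y h} ->
  \sum_(h in S) Ph R adj h <= Py R adj y.
Proof.
move=> compS; rewrite /Py big_mkcond [leRHS]big_mkcond /=.
apply: ler_sum => h _; case: ifPn => [hS | _]; first by rewrite compS.
by case: ifP => _ //; exact: Ph_ge0.
Qed.

Section CliqueLayers.

Variables (n : nat) (adj : rel 'I_n) (C : {set 'I_n}).

Definition clique_labeling : {ffun 'I_n -> label} := [ffun k => k \in C].

Definition clique_latent (i : 'I_n) : latent_labeling n :=
  [ffun k => (k \in C, i)].

Lemma clique_latent_inj : injective clique_latent.
Proof.
move=> i j /(congr1 (fun h : latent_labeling n => (h i).2)).
by rewrite !ffunE.
Qed.

Lemma compatible_clique_latent i : compatible clique_labeling (clique_latent i).
Proof. by apply/forallP => k; rewrite !ffunE. Qed.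

Lemma clique_latent_in_layer i :
  is_clique adj C -> i \in C -> in_layer adj i (clique_latent i).
Proof.
move=> cliqueC iC; apply/andP; split; last by rewrite ffunE iC.
apply/forallP => k; rewrite ffunE /= eqxx /=; apply/implyP => kC.
by case: (eqVneq k i) => //= k_ne_i; exact: cliqueC.
Qed.

End CliqueLayers.

Theorem lemma2 (R : realFieldType) (n : nat) (adj : rel 'I_n)
  (adj_sym : symmetric adj) (adj_irr : irreflexive adj)
  (c : nat) (C : {set 'I_n}) (hC : is_clique adj C) (hcard : #|C| = c) :
  exists y : {ffun 'I_n -> label},
    Py R adj y >= (c%:R) / ((alpha adj)%:R).
Proof.
exists (clique_labeling C).
have compat : {in clique_latent C @: C, forall h,
    compatible (clique_labeling C) h}.
  by move=> _ /imsetP[i _ ->]; exact: compatible_clique_latent.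
apply: le_trans (Py_ge_sum R adj compat).
rewrite big_imset /=; last by move=> i j _ _; exact: clique_latent_inj.
rewrite (eq_bigr (fun=> (alpha adj)%:R^-1)) => [|i iC]; last first.
  by rewrite /Ph (_ : valid _ _) //; apply/existsP; exists i;
    exact: clique_latent_in_layer.
by rewrite sumr_const hcard mulr_natl.
Qed.
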